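(* Let $SC_3(x)=\sum_{n\ge0} sc_3(\mathcal{D}_n)x^n$, where $sc_3(\mathcal{D}_n)$ is the number of saturated chains of length 3 in the Dyck lattice $\mathcal{D}_n$. Then $$ SC_3(x)=\sum_{n\ge0}\sum_{\gamma\in\mathcal{D}_n}\big(6\,\#(du,du,du)_\gamma+3\,\#(du,ddu)_\gamma+3\,\#(du,duu)_\gamma+\#(dddu)_\gamma+\#(duuu)_\gamma+2\,\#(dduu)_\gamma+2\,\#(dudu)_\gamma\big)x^n . $$
   Context: A Dyck path of semilength $n$ is a lattice path from $(0,0)$ to $(2n,0)$ with steps $u=(1,1)$ and $d=(1,-1)$ never going below the $x$-axis, identified with a word over $\{u,d\}$. $\mathcal{D}_n$ is the set of Dyck paths of semilength $n$ ordered by containment: $\gamma\le\gamma'$ iff $\gamma$ lies weakly below $\gamma'$. A saturated chain of length $h$ is a sequence $\gamma^{(0)}<\cdots<\gamma^{(h)}$ in which each element covers the previous one. For words $\gamma_1,\ldots,\gamma_k$, $\#(\gamma_1,\ldots,\gamma_k)_\gamma$ denotes the number of sets of pairwise disjoint (non-overlapping) occurrences of the factors $\gamma_1,\ldots,\gamma_k$ in $\gamma$ (occurrences of equal words being unordered); e.g. $\#(du,du,du)_\gamma$ is the number of 3-element sets of valleys of $\gamma$, $\#(du,ddu)_\gamma$ is the number of pairs consisting of an occurrence of $du$ and a non-overlapping occurrence of $ddu$, and $\#(w)_\gamma$ is the number of occurrences of the factor $w$ in $\gamma$. *)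

(* Dyck paths encoded as boolean words: true = u, false = d. *)
From mathcomp Require Import all_boot all_order all_algebra.
Set Implicit Arguments. Unset Strict Implicit. Unset Printing Implicit Defensive.
Import GRing.Theory Num.Theory.

Definition word (n : nat) : finType := (n.*2).-tuple bool.

Definition height (s : seq bool) (k : nat) : int :=
  ((count id (take k s))%:Z - (count negb (take k s))%:Z)%R.

Definition is_dyck (s : seq bool) : bool :=
  [forall k : 'I_(size s).+1, (0 <= height s k)%R] && (height s (size s) == 0%R).

Definition below (n : nat) (g g' : word n) : bool :=
  [forall k : 'I_(n.*2).+1, (height g k <= height g' k)%R].

Definition sbelow (n : nat) (g g' : word n) : bool :=
  [&& is_dyck g, is_dyck g', below g g' & g != g'].

Definition covers (n : nat) (g g' : word n) : bool :=
  sbelow g g' && [forall d : word n, ~~ (is_dyck d && sbelow g d && sbelow d g')].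

Definition sc3 (n : nat) : nat :=
  #|[set c : word n * word n * word n * word n |
      [&& covers c.1.1.1 c.1.1.2, covers c.1.1.2 c.1.2 & covers c.1.2 c.2]]|.

Definition occ (w s : seq bool) (i : nat) : bool :=
  (i + size w <= size s) && (take (size w) (drop i s) == w).

Definition disj (w1 : seq bool) (i : nat) (w2 : seq bool) (j : nat) : bool :=
  (i + size w1 <= j) || (j + size w2 <= i).

Definition cnt1 (w s : seq bool) : nat :=
  \sum_(i < size s) occ w s i.

(* #(w1,w2)_s for distinct words w1 <> w2: pairs of non-overlapping
   occurrences of w1 and of w2 *)
Definition cnt2 (w1 w2 s : seq bool) : nat :=
  \sum_(i < size s) \sum_(j < size s) [&& occ w1 s i, occ w2 s j & disj w1 i w2 j].

Definition cnt3 (w s : seq bool) : nat :=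
  \sum_(i < size s) \sum_(j < size s) \sum_(k < size s)
    [&& (i < j)%N, (j < k)%N, occ w s i, occ w s j, occ w s k,
        disj w i w j, disj w i w k & disj w j w k].

Definition u := true.
Definition d := false.

Definition weight (s : seq bool) : nat :=
  6 * cnt3 [:: d; u] s
  + 3 * cnt2 [:: d; u] [:: d; d; u] s
  + 3 * cnt2 [:: d; u] [:: d; u; u] s
  + cnt1 [:: d; d; d; u] s
  + cnt1 [:: d; u; u; u] s
  + 2 * cnt1 [:: d; d; u; u] s
  + 2 * cnt1 [:: d; u; d; u] s.

From mathcomp Require Import all_boot all_order all_algebra zify.
Set Implicit Arguments. Unset Strict Implicit. Unset Printing Implicit Defensive.

(* A Dyck path is covered exactly by the paths obtained by turning one of its
   valleys [du] into a peak [ud], and different valleys give different covers.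
   Hence the saturated 3-chains starting at [g] are counted by choosing a valley
   three times in succession.  Turning the valley at [i] into a peak only changes
   the factors meeting positions [i] and [i+1]: the numbers of [du], [ddu] and
   [duu] change by amounts read off the letters around [i], i.e. by occurrences
   of [ddu], [duu], [dddu], [dudu], [duuu] anchored at that valley.  Summing over
   the valleys turns the chain count into a polynomial in pattern counts, which is
   the weight once #(du,du,du) = C(#du, 3) and #(du,dxu) = #dxu (#du - 1). *)

Definition up (s : seq bool) (i : nat) : bool := nth d s i.
Arguments up : simpl never.

Definition valley (s : seq bool) (i : nat) : bool := ~~ up s i && up s i.+1.

(* [w] occurs in [s] with its [k]-th letter at position [i]; the guard rules out
   the truncated subtraction [i - k]. *)
Definition occ_anchor (w : seq bool) (k : nat) (s : seq bool) (i : nat) : bool :=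
  (k <= i) && occ w s (i - k).

Lemma up_default s i : size s <= i -> up s i = false.
Proof. by move=> le_s_i; rewrite /up nth_default. Qed.

Lemma up_size s i : up s i -> i < size s.
Proof. by apply: contraTT; rewrite -leqNgt => /up_default ->. Qed.

Lemma valley_size s i : valley s i -> i.+1 < size s.
Proof. by case/andP=> _ /up_size. Qed.

Lemma occ_size w s i : occ w s i -> i + size w <= size s.
Proof. by case/andP. Qed.

Lemma occ_up w s i m : occ w s i -> m < size w -> up s (i + m) = nth d w m.
Proof.
by case/andP=> _ /eqP Ew lt_m_w; rewrite -Ew /up nth_take // nth_drop.
Qed.

Lemma occE w s i : last d w ->
  occ w s i = ([seq up s (i + m) | m <- iota 0 (size w)] == w).
Proof.
move=> last_w; rewrite /occ; case: leqP => [le_iw_s | lt_s_iw] /=.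
  congr (_ == _); apply: (@eq_from_nth _ d).
    by rewrite size_takel ?size_drop ?size_map ?size_iota //; lia.
  move=> m; rewrite size_takel ?size_drop; last lia.
  by move=> lt_m_w; rewrite nth_take // nth_drop (nth_map 0) ?size_iota // nth_iota.
apply/esym/negbTE/eqP => Ew.
have w_gt0 : 0 < size w by move: last_w; case: (w).
have := congr1 (nth d ^~ (size w).-1) Ew.
rewrite (nth_map 0) ?size_iota ?nth_iota; try lia.
rewrite nth_last last_w => /up_size; lia.
Qed.

Lemma occ_anchor_valley w k s i : ~~ nth d w k -> nth d w k.+1 ->
  occ_anchor w k s i -> valley s i.
Proof.
move=> wk wk1 /andP[le_k_i Ow].
have lt_k_w : k.+1 < size w.
  by case: ltnP wk1 => // ?; rewrite nth_default.
have -> : i = i - k + k by rewrite subnK.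
by rewrite /valley -addnS !(occ_up Ow) ?wk ?wk1 // ltnW.
Qed.

Lemma cnt1E w s : cnt1 w s = \sum_(0 <= i < size s) occ w s i.
Proof. by rewrite /cnt1 big_mkord. Qed.

Lemma sum_valley_anchor w k s : ~~ nth d w k -> nth d w k.+1 ->
  \sum_(0 <= i < size s) valley s i * occ_anchor w k s i = cnt1 w s.
Proof.
move=> wk wk1; have lt_k_w : k < size w.
  by case: ltnP wk1 => // ?; rewrite nth_default //; lia.
have anchor_valley i : valley s i * occ_anchor w k s i = occ_anchor w k s i.
  by case A: (occ_anchor w k s i); rewrite ?muln0 // (occ_anchor_valley wk wk1 A).
rewrite (eq_bigr _ (fun i _ => anchor_valley i)) cnt1E.
transitivity (\sum_(0 <= i < size s + k) occ_anchor w k s i).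
  rewrite (big_cat_nat (leq0n _) (leq_addr k _)) /= [X in _ = _ + X]big1_seq ?addn0 //.
  move=> i /andP[_]; rewrite mem_index_iota => /andP[le_s_i _].
  by apply/eqP; rewrite eqb0; apply/andP => -[le_k_i /occ_size]; lia.
rewrite (big_cat_nat (leq0n k) (leq_addl _ _)) /= big1_seq ?add0n; last first.
  move=> i /andP[_]; rewrite mem_index_iota /occ_anchor => /andP[_ lt_i_k].
  by rewrite leqNgt lt_i_k.
rewrite -{1}[k]add0n big_addn addnK; apply: eq_bigr => i _.
by rewrite /occ_anchor leq_addl addnK.
Qed.

(** * Raising a valley *)

(* Turns the valley [du] at [i] into a peak [ud]; these are exactly the covers in
   the Dyck lattice (covers_raiseP). *)
Definition raise (s : seq bool) (i : nat) : seq bool :=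
  mkseq (fun k => if k == i then u else if k == i.+1 then d else up s k) (size s).

Lemma size_raise s i : size (raise s i) = size s.
Proof. exact: size_mkseq. Qed.

Lemma up_raise s i k : valley s i ->
  up (raise s i) k = if k == i then true else if k == i.+1 then false else up s k.
Proof.
move=> /valley_size lt_i1_s; rewrite /up /raise.
case: (ltnP k (size s)) => [lt_k_s | le_s_k]; first by rewrite nth_mkseq.
rewrite !nth_default ?size_mkseq //.
by rewrite ifN_eq ?ifN_eq //; apply/eqP; lia.
Qed.

Lemma sum_pin N p (e : bool) : (e -> p < N) -> \sum_(0 <= j < N) ((j == p) && e) = e.
Proof.
case: e => [/(_ isT) lt_p_N | _]; last by rewrite big1 // => j _; rewrite andbF.
by rewrite (bigD1_seq p) ?mem_index_iota ?iota_uniq //= eqxx big1 // => j /negbTE ->.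
Qed.

Lemma sum_local_change N (f g : nat -> nat) a b c (x y z : bool) :
  (x -> a < N) -> (y -> b < N) -> (z -> c < N) ->
  (forall j, f j + ((j == a) && x) = g j + ((j == b) && y) + ((j == c) && z)) ->
  \sum_(0 <= j < N) f j + x = \sum_(0 <= j < N) g j + y + z.
Proof.
move=> /sum_pin <- /sum_pin <- /sum_pin <- fg.
by rewrite -!big_split; apply: eq_bigr => j _; apply: fg.
Qed.

Lemma occ_anchor_size w k s i : occ_anchor w k s i -> i - k + size w <= size s.
Proof. by case/andP=> _ /occ_size. Qed.

Ltac decide_nat := repeat match goal with
 | |- context [?a == ?b :> nat] =>
    (have ->: (a == b) = true by apply/eqP; lia) ||
    (have ->: (a == b) = false by apply/eqP; lia) || move: (a == b)
 | |- context [?a <= ?b] =>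
    (have ->: (a <= b) = true by lia) || (have ->: (a <= b) = false by lia) || move: (a <= b)
 end.

(* Splits on the position of [j] relative to [i]; when they are close, both are
   rewritten as a single variable plus constants, so that equal letters of the
   word become syntactically equal and a case analysis on them decides the goal. *)
Ltac compare_positions i j :=
  (have [?|[?|[?|[?|[?|[?|[?|[?|?]]]]]]]] :
    j + 3 < i \/ j.+3 = i \/ j.+2 = i \/ j.+1 = i \/ j = i \/
    j = i.+1 \/ j = i.+2 \/ j = i.+3 \/ i + 3 < j by lia);
  subst; first [case: i => [|[|i]] | case: j => [|[|j]] | idtac];
  rewrite ?subSS ?subn0 ?sub0n ?addn0 ?addn1 ?addn2 ?addn3 /valley /d /u
    !eqseq_cons ?eqbF_neg ?eqb_id ?eqxx /=;
  decide_nat; rewrite /=;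
  repeat match goal with |- context [up ?t ?k] => case: (up t k) end;
  by [].

Lemma valley_raise_at s i : valley s i -> forall j,
  occ [:: d; u] (raise s i) j + ((j == i) && valley s i) =
  occ [:: d; u] s j + ((j == i - 1) && occ_anchor [:: d; d; u] 1 s i)
                    + ((j == i.+1) && occ_anchor [:: d; u; u] 0 s i).
Proof.
move=> V j; rewrite /occ_anchor !occE //= !up_raise //.
by move: V; compare_positions i j.
Qed.

Lemma ddu_raise_at s i : valley s i -> forall j,
  occ [:: d; d; u] (raise s i) j + ((j == i - 1) && occ_anchor [:: d; d; u] 1 s i) =
  occ [:: d; d; u] s j + ((j == i - 2) && occ_anchor [:: d; d; d; u] 2 s i)
                       + ((j == i.+1) && occ_anchor [:: d; u; d; u] 0 s i).
Proof.
move=> V j; rewrite /occ_anchor !occE //= !up_raise //.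
by move: V; compare_positions i j.
Qed.

Lemma duu_raise_at s i : valley s i -> forall j,
  occ [:: d; u; u] (raise s i) j + ((j == i) && occ_anchor [:: d; u; u] 0 s i) =
  occ [:: d; u; u] s j + ((j == i - 2) && occ_anchor [:: d; u; d; u] 2 s i)
                       + ((j == i.+1) && occ_anchor [:: d; u; u; u] 0 s i).
Proof.
move=> V j; rewrite /occ_anchor !occE //= !up_raise //.
by move: V; compare_positions i j.
Qed.

Lemma cnt_valley_raise s i : valley s i ->
  cnt1 [:: d; u] (raise s i) + 1 =
  cnt1 [:: d; u] s + occ_anchor [:: d; d; u] 1 s i + occ_anchor [:: d; u; u] 0 s i.
Proof.
move=> V; rewrite !cnt1E size_raise.
have := sum_local_change _ _ _ (valley_raise_at V); rewrite V.
apply=> [_ | /occ_anchor_size | /occ_anchor_size] /=.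
all: by have := valley_size V; lia.
Qed.

Lemma cnt_ddu_raise s i : valley s i ->
  cnt1 [:: d; d; u] (raise s i) + occ_anchor [:: d; d; u] 1 s i =
  cnt1 [:: d; d; u] s + occ_anchor [:: d; d; d; u] 2 s i + occ_anchor [:: d; u; d; u] 0 s i.
Proof.
move=> V; rewrite !cnt1E size_raise.
apply: (sum_local_change _ _ _ (ddu_raise_at V)) => /occ_anchor_size /=; lia.
Qed.

Lemma cnt_duu_raise s i : valley s i ->
  cnt1 [:: d; u; u] (raise s i) + occ_anchor [:: d; u; u] 0 s i =
  cnt1 [:: d; u; u] s + occ_anchor [:: d; u; d; u] 2 s i + occ_anchor [:: d; u; u; u] 0 s i.
Proof.
move=> V; rewrite !cnt1E size_raise.
apply: (sum_local_change _ _ _ (duu_raise_at V)) => /occ_anchor_size /=; lia.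
Qed.

Lemma sum_pairs N (f : nat -> bool) :
  \sum_(0 <= i < N) \sum_(0 <= j < N) [&& i < j, f i & f j] = 'C(\sum_(0 <= i < N) f i, 2).
Proof.
elim: N => [|N IHN]; first by rewrite !big_geq.
rewrite big_nat_recr //= [X in _ + X]big1_seq ?addn0; last first.
  by move=> j; rewrite mem_index_iota ltnS => /andP[_ /leq_gtF ->].
rewrite (eq_big_nat _ _
  (F2 := fun i => \sum_(0 <= j < N) [&& i < j, f i & f j] + f i * f N)); last first.
  move=> i /andP[_ lt_i_N]; rewrite big_nat_recr //= lt_i_N.
  by case: (f i); case: (f N).
rewrite big_split /= IHN -big_distrl big_nat_recr //= mulnC.
by case: (f N); rewrite /= ?mul1n ?mul0n ?addn0 // addn1 binS bin1 addnC.
Qed.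

Lemma sum_triples N (f : nat -> bool) :
  \sum_(0 <= i < N) \sum_(0 <= j < N) \sum_(0 <= k < N) [&& i < j, j < k, f i, f j & f k] =
  'C(\sum_(0 <= i < N) f i, 3).
Proof.
elim: N => [|N IHN]; first by rewrite !big_geq.
rewrite big_nat_recr //= [X in _ + X]big1_seq ?addn0; last first.
  move=> j; rewrite mem_index_iota ltnS => /andP[_ le_j_N]; apply: big1 => k _.
  by rewrite (leq_gtF le_j_N).
rewrite (eq_big_nat _ _ (F2 := fun i => \sum_(0 <= j < N) \sum_(0 <= k < N)
    [&& i < j, j < k, f i, f j & f k] + (\sum_(0 <= j < N) [&& i < j, f i & f j]) * f N));
  last first.
  move=> i /andP[_ lt_i_N]; rewrite big_nat_recr //= [X in _ + X]big1_seq ?addn0; last first.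
    by move=> k; rewrite mem_index_iota ltnS => /andP[_ /leq_gtF ->]; rewrite andbF.
  rewrite big_distrl -big_split /=; apply: eq_big_nat => j /andP[_ lt_j_N].
  by rewrite big_nat_recr //= lt_j_N; case: (i < j); case: (f i); case: (f j); case: (f N).
rewrite big_split /= IHN -big_distrl sum_pairs big_nat_recr //= mulnC.
by case: (f N); rewrite /= ?mul1n ?mul0n ?addn0 // addn1 binS addnC.
Qed.

Lemma occ_valley s i : occ [:: d; u] s i = valley s i.
Proof. by rewrite occE //= addn0 addn1 /d /u !eqseq_cons eqbF_neg eqb_id andbT. Qed.

Lemma cnt1_valley s : cnt1 [:: d; u] s = \sum_(0 <= i < size s) valley s i.
Proof. by rewrite cnt1E; apply: eq_bigr => i _; rewrite occ_valley. Qed.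

Lemma valley_sep s i j : valley s i -> valley s j -> i < j -> i.+1 < j.
Proof.
move=> /andP[_ up_i1] /andP[not_up_j _] lt_ij; rewrite ltn_neqAle lt_ij andbT.
by apply: contraNneq not_up_j => <-.
Qed.

Lemma cnt2E w1 w2 s : cnt2 w1 w2 s =
  \sum_(0 <= i < size s) \sum_(0 <= j < size s) [&& occ w1 s i, occ w2 s j & disj w1 i w2 j].
Proof. by rewrite big_mkord; apply: eq_bigr => i _; rewrite big_mkord. Qed.

Lemma cnt3E w s : cnt3 w s =
  \sum_(0 <= i < size s) \sum_(0 <= j < size s) \sum_(0 <= k < size s)
    [&& i < j, j < k, occ w s i, occ w s j, occ w s k,
        disj w i w j, disj w i w k & disj w j w k].
Proof.
rewrite big_mkord; apply: eq_bigr => i _; rewrite big_mkord.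
by apply: eq_bigr => j _; rewrite big_mkord.
Qed.

Lemma cnt3_valleys s : cnt3 [:: d; u] s = 'C(cnt1 [:: d; u] s, 3).
Proof.
rewrite cnt3E cnt1_valley -sum_triples.
apply: eq_bigr => i _; apply: eq_bigr => j _; apply: eq_bigr => k _.
rewrite !occ_valley /disj /=; congr nat_of_bool; apply/idP/idP.
  by case/and5P=> -> -> -> -> /andP[-> _].
case/and5P=> lt_ij lt_jk Vi Vj Vk.
have := valley_sep Vi Vj lt_ij; have := valley_sep Vj Vk lt_jk.
by rewrite lt_ij lt_jk Vi Vj Vk /=; lia.
Qed.

Lemma valley_dxu_at x s i j :
  [&& occ [:: d; u] s i, occ [:: d; x; u] s j & disj [:: d; u] i [:: d; x; u] j]
    + ((i == j + ~~ x) && occ [:: d; x; u] s j)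
  = occ [:: d; u] s i * occ [:: d; x; u] s j.
Proof. by case: x; rewrite !occE //= /disj; compare_positions i j. Qed.

Lemma cnt2_valley_dxu x s :
  cnt2 [:: d; u] [:: d; x; u] s + cnt1 [:: d; x; u] s =
  cnt1 [:: d; x; u] s * cnt1 [:: d; u] s.
Proof.
rewrite cnt2E exchange_big_nat !cnt1E big_distrl -big_split /=.
apply: eq_bigr => j _.
have pin := @sum_pin (size s) (j + ~~ x) (occ [:: d; x; u] s j).
rewrite -[X in _ + X = _]pin => [|/occ_size /=]; last by lia.
rewrite -big_split big_distrr; apply: eq_bigr => i _.
exact: etrans (valley_dxu_at x s i j) (mulnC _ _).
Qed.

(** * Chains of valley raisings *)

Fixpoint raise_chains (h : nat) (s : seq bool) : nat :=
  if h is h'.+1 then \sum_(0 <= i < size s) valley s i * raise_chains h' (raise s i)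
  else 1.

Lemma raise_chains1 s : raise_chains 1 s = cnt1 [:: d; u] s.
Proof. by rewrite cnt1_valley; apply: eq_bigr => i _; rewrite muln1. Qed.

Lemma cnt1_anchor_le w k s : ~~ nth d w k -> nth d w k.+1 ->
  cnt1 w s <= cnt1 [:: d; u] s.
Proof.
move=> wk wk1; rewrite -(sum_valley_anchor s wk wk1) cnt1_valley.
by apply: leq_sum => i _; case: occ_anchor; rewrite ?muln1 ?muln0.
Qed.

Lemma raise_chainsS h s :
  raise_chains h.+1 s = \sum_(0 <= i < size s) valley s i * raise_chains h (raise s i).
Proof. by []. Qed.

Lemma raise_chains2 s : raise_chains 2 s + cnt1 [:: d; u] s =
  cnt1 [:: d; u] s * cnt1 [:: d; u] s + cnt1 [:: d; d; u] s + cnt1 [:: d; u; u] s.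
Proof.
set V := cnt1 [:: d; u] s.
have per_valley i : valley s i * raise_chains 1 (raise s i) + valley s i =
    valley s i * V + valley s i * occ_anchor [:: d; d; u] 1 s i
                   + valley s i * occ_anchor [:: d; u; u] 0 s i.
  by case Vi: (valley s i); rewrite ?mul1n // raise_chains1 cnt_valley_raise.
rewrite {1}/V cnt1_valley raise_chainsS -big_split (eq_bigr _ (fun i _ => per_valley i)).
by rewrite !big_split /= -big_distrl -cnt1_valley !sum_valley_anchor.
Qed.

Lemma occ_anchor_dduu s i :
  occ_anchor [:: d; d; u] 1 s i && occ_anchor [:: d; u; u] 0 s i =
  occ_anchor [:: d; d; u; u] 1 s i.
Proof.
case: i => [|i]; rewrite /occ_anchor //= ?subSS ?subn0 !occE //= ?addn0 ?addn1 ?addn2 ?addn3.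
rewrite /d /u !eqseq_cons ?eqbF_neg ?eqb_id ?eqxx /=.
by repeat match goal with |- context [up ?t ?k] => case: (up t k) end.
Qed.

Lemma cnt1_valley_pos s i : valley s i -> 0 < cnt1 [:: d; u] s.
Proof.
move=> V; rewrite cnt1_valley (bigD1_seq i) ?mem_index_iota ?iota_uniq //= ?V //.
by have := valley_size V; lia.
Qed.

Lemma raise_chains2_raise s i : valley s i ->
  let m := (cnt1 [:: d; u] s).-1 in
  let a := occ_anchor [:: d; d; u] 1 s i in
  let b := occ_anchor [:: d; u; u] 0 s i in
  raise_chains 2 (raise s i) + m + a + b =
  m * m + 2 * m * (a + b) + 2 * occ_anchor [:: d; d; u; u] 1 s i
  + cnt1 [:: d; d; u] s + cnt1 [:: d; u; u] s
  + occ_anchor [:: d; d; d; u] 2 s i + occ_anchor [:: d; u; d; u] 0 s i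
  + occ_anchor [:: d; u; d; u] 2 s i + occ_anchor [:: d; u; u; u] 0 s i.
Proof.
move=> V m a b; rewrite -occ_anchor_dduu -/a -/b.
have := raise_chains2 (raise s i); have := cnt_valley_raise V.
have := cnt_ddu_raise V; have := cnt_duu_raise V; have := cnt1_valley_pos V.
rewrite -/a -/b /m; case: (cnt1 [:: d; u] s) => // {}m _ /=.
case: a; case: b => /=; nia.
Qed.

Lemma raise_chains3_count s :
  let V := cnt1 [:: d; u] s in let m := V.-1 in
  let A := cnt1 [:: d; d; u] s in let B := cnt1 [:: d; u; u] s in
  raise_chains 3 s + V * m + A + B =
  V * (m * m) + 2 * m * (A + B) + 2 * cnt1 [:: d; d; u; u] s + V * A + V * B
  + cnt1 [:: d; d; d; u] s + 2 * cnt1 [:: d; u; d; u] s + cnt1 [:: d; u; u; u] s.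
Proof.
move=> V m A B; set an := occ_anchor.
have per_valley i :
    valley s i * raise_chains 2 (raise s i) + valley s i * m
    + valley s i * an [:: d; d; u] 1 s i + valley s i * an [:: d; u; u] 0 s i =
    valley s i * (m * m)
    + 2 * m * (valley s i * an [:: d; d; u] 1 s i + valley s i * an [:: d; u; u] 0 s i)
    + 2 * (valley s i * an [:: d; d; u; u] 1 s i) + valley s i * A + valley s i * B
    + valley s i * an [:: d; d; d; u] 2 s i + valley s i * an [:: d; u; d; u] 0 s i
    + valley s i * an [:: d; u; d; u] 2 s i + valley s i * an [:: d; u; u; u] 0 s i.
  case Vi: (valley s i); last by rewrite !mul0n !muln0.
  by rewrite !mul1n (raise_chains2_raise Vi).
have := @eq_bigr _ 0 addn _ (index_iota 0 (size s)) xpredT _ _ (fun i _ => per_valley i).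
rewrite !big_split -!big_distrl -!big_distrr -raise_chainsS -cnt1_valley.
by rewrite !big_split !sum_valley_anchor // big1_eq /= -/V; lia.
Qed.

Lemma raise_chains3 s : raise_chains 3 s = weight s.
Proof.
have le_V w k : ~~ nth d w k -> nth d w k.+1 -> cnt1 w s <= cnt1 [:: d; u] s.
  exact: cnt1_anchor_le.
have := le_V [:: d; d; u] 1 erefl erefl; have := le_V [:: d; u; u] 0 erefl erefl.
have := le_V [:: d; d; u; u] 1 erefl erefl; have := le_V [:: d; d; d; u] 2 erefl erefl.
have := le_V [:: d; u; d; u] 0 erefl erefl; have := le_V [:: d; u; u; u] 0 erefl erefl.
have := cnt2_valley_dxu d s; have := cnt2_valley_dxu u s.
have := raise_chains3_count s; rewrite /weight cnt3_valleys /=.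
case: (cnt1 [:: d; u] s) => [|v]; first by rewrite bin0n; lia.
have C3 : 'C(v.+1, 3) * 6 + v.+1 * v = v.+1 * v * v.
  rewrite (bin_ffact v.+1 3) !ffactnS ffactn0 /= muln1.
  by case: v => [|v] //=; nia.
nia.
Qed.

(** * Heights and the covering relation *)

Import Order.TTheory GRing.Theory Num.Theory.

Lemma height0 s : height s 0 = 0%R.
Proof. by rewrite /height take0. Qed.

Lemma height_size s k : size s <= k -> height s k = height s (size s).
Proof. by move=> le_s_k; rewrite /height take_oversize ?take_size. Qed.

Lemma heightS s k : height s k.+1 =
  (height s k + (if (k < size s)%N then (if up s k then 1 else -1) else 0))%R.
Proof.
case: ltnP => [lt_k_s | le_s_k]; last by rewrite addr0 !height_size //; lia.
rewrite /height (take_nth d lt_k_s) -cats1 !count_cat /= /up.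
by case: (nth d s k) => /=; lia.
Qed.

Lemma height_parity s t k : size s = size t ->
  exists z : int, height t k = (height s k + 2 * z)%R.
Proof.
move=> eq_st; exists ((count id (take k t))%:Z - (count id (take k s))%:Z)%R.
have count_split r : count id r + count negb r = size r := count_predC id r.
have := count_split (take k s); have := count_split (take k t).
by rewrite /height !size_take eq_st; lia.
Qed.

Lemma height_inj s t : size s = size t -> (forall k, height s k = height t k) -> s = t.
Proof.
move=> eq_st eq_h; apply: (@eq_from_nth _ d) => // k lt_k_s.
have := eq_h k.+1; rewrite !heightS eq_h -eq_st lt_k_s -/(up s k) -/(up t k).
by case: (up s k); case: (up t k) => //=; lia.
Qed.

Lemma height_raise s i k : valley s i ->
  height (raise s i) k = (height s k + (if k == i.+1 then 2 else 0))%R.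
Proof.
move=> V; have lt_i1_s := valley_size V; case/andP: (V) => /negbTE not_up_i up_i1.
elim: k => [|k IHk]; first by rewrite !height0.
rewrite !heightS IHk size_raise (@up_raise s i k V) eqSS.
case: (eqVneq k i) => [->|ne_ki]; first by rewrite (ltnW lt_i1_s) not_up_i ifN_eq //; lia.
case: (eqVneq k i.+1) => [->|ne_ki1]; first by rewrite lt_i1_s up_i1; lia.
lia.
Qed.

Lemma dyckP s :
  reflect ((forall k, 0 <= height s k)%R /\ height s (size s) = 0%R) (is_dyck s).
Proof.
apply: (iffP andP) => [[/forallP h_ge0 /eqP h_end] | [h_ge0 h_end]]; split => //.
- move=> k; case: (leqP k (size s)) => [le_k_s | lt_s_k].
    by have := h_ge0 (Ordinal (le_k_s : k < (size s).+1)).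
  by rewrite height_size ?(ltnW lt_s_k) // h_end.
- exact/forallP.
- exact/eqP.
Qed.

Lemma belowP n (g g' : word n) :
  reflect (forall k, height g k <= height g' k)%R (below g g').
Proof.
apply: (iffP forallP) => [le_gg' k | le_gg' k //].
case: (leqP k n.*2) => [le_k_n | lt_n_k].
  by have := le_gg' (Ordinal (le_k_n : k < n.*2.+1)).
rewrite !height_size ?size_tuple ?(ltnW lt_n_k) //.
exact: (le_gg' (Ordinal (ltnSn n.*2))).
Qed.

Lemma dyck_raise s i : is_dyck s -> valley s i -> is_dyck (raise s i).
Proof.
move=> /dyckP[h_ge0 h_end] V; apply/dyckP; split.
  by move=> k; rewrite height_raise //; have := h_ge0 k; case: ifP => _; lia.
rewrite size_raise height_raise // h_end ifN_eq //.
by have := valley_size V; apply: contraTneq => ->; rewrite ltnn.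
Qed.

Lemma size_raise_word n (g : word n) i : size (raise g i) == n.*2.
Proof. by rewrite size_raise size_tuple. Qed.

Definition raise_word n (g : word n) i : word n := Tuple (size_raise_word g i).

Lemma word_heights_inj n (g g' : word n) : (forall k, height g k = height g' k) -> g = g'.
Proof. by move=> eq_h; apply/val_inj/height_inj; rewrite ?size_tuple. Qed.

Lemma raise_word_inj n (g : word n) i j :
  valley g i -> valley g j -> raise_word g i = raise_word g j -> i = j.
Proof.
move=> Vi Vj /(congr1 (fun t : word n => up t i)) /=.
rewrite !up_raise // eqxx; case: eqVneq => // ne_ij; case: ifP => // _.
by case/andP: Vi => /negbTE ->.
Qed.

Lemma covers_raise n (g : word n) i : is_dyck g -> valley g i -> covers g (raise_word g i).
Proof.
move=> Dg V; have Dr : is_dyck (raise g i) by exact: dyck_raise.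
have hr k : height (raise_word g i) k = (height g k + (if k == i.+1 then 2 else 0))%R.
  exact: height_raise.
apply/andP; split.
  rewrite /sbelow Dg /= Dr /=; apply/andP; split.
    by apply/belowP => k; rewrite hr; case: ifP; lia.
  by apply/eqP => /(congr1 (fun t : word n => height t i.+1)); rewrite hr eqxx; lia.
apply/forallP => t; apply/negP => /andP[/andP[_ /and4P[_ _ /belowP le_gt ne_gt]]].
move=> /and4P[_ _ /belowP le_tr ne_tr].
(* [t] agrees with [g] except at [i.+1], where parity leaves only two heights. *)
have [z hz] := @height_parity g t i.+1 (etrans (size_tuple g) (esym (size_tuple t))).
have := le_gt i.+1; have := le_tr i.+1; rewrite hr eqxx hz => up_bound low_bound.
have [z0 | z1] : z = 0 \/ z = 1 by lia.
- move/eqP: ne_gt; apply; apply: word_heights_inj => k.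
  have := le_gt k; have := le_tr k; rewrite hr.
  by case: eqP => [->|_]; rewrite ?hz ?z0; lia.
- move/eqP: ne_tr; apply; apply: word_heights_inj => k.
  have := le_gt k; have := le_tr k; rewrite hr.
  by case: eqP => [->|_]; rewrite ?hz ?z1; lia.
Qed.

Lemma gap_after_down s t k : size s = size t -> (height s k < height t k)%R ->
  exists a, [/\ a < k, up s a = false & (height s a.+1 < height t a.+1)%R].
Proof.
move=> eq_st; elim: k => [|k IHk]; first by rewrite !height0.
case up_k: (up s k) => gap; last by exists k.
have [a [lt_a_k not_up_a gap_a]] : exists a, [/\ a < k, up s a = false &
    (height s a.+1 < height t a.+1)%R].
  apply: IHk; move: gap; rewrite !heightS -eq_st (up_size up_k) up_k.
  by case: (up t k); lia.
by exists a; split => //; apply: ltn_trans lt_a_k _.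
Qed.

Lemma gap_at_valley s t a : is_dyck s -> is_dyck t -> size s = size t ->
  up s a = false -> (height s a.+1 < height t a.+1)%R ->
  exists p, valley s p /\ (height s p.+1 < height t p.+1)%R.
Proof.
move=> /dyckP[_ s_end] /dyckP[_ t_end] eq_st.
have no_gap_after k : size s <= k.+1 -> height s k.+1 = height t k.+1.
  by move=> le_s_k; rewrite height_size // s_end (height_size (s := t)) ?t_end // -eq_st.
elim: {a}(size s - a) {-2}a (leqnn (size s - a)) => [|m IHm] a le_sa not_up_a gap.
  by rewrite no_gap_after in gap; lia.
case up_a1: (up s a.+1); first by exists a; rewrite /valley not_up_a up_a1.
case: (ltnP a.+1 (size s)) => [lt_a1_s | le_s_a1]; last by rewrite no_gap_after in gap; lia.
apply: (IHm a.+1) => //; first lia.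
move: gap; rewrite !(heightS _ a.+1) -eq_st lt_a1_s up_a1.
by case: (up t a.+1); lia.
Qed.

Lemma covers_raiseP n (g g' : word n) :
  covers g g' -> exists2 i, valley g i & g' = raise_word g i.
Proof.
move=> /andP[/and4P[Dg Dg' /belowP le_gg' ne_gg'] /forallP no_between].
have eq_size : size g = size g' by rewrite !size_tuple.
have [k gap_k] : exists k, (height g k < height g' k)%R.
  case: (boolP [exists k : 'I_(n.*2).+1, height g k < height g' k]%R).
    by case/existsP=> k; exists k.
  move=> /existsPn no_gap; case/eqP: ne_gg'; apply: word_heights_inj => k.
  have h_min (t : word n) : height t k = height t (minn k n.*2).
    case: (leqP k n.*2) => [// | /ltnW le_n_k].
    by rewrite height_size // size_tuple.
  have := le_gg' (minn k n.*2).
  have := no_gap (Ordinal (geq_minr k n.*2 : minn k n.*2 < n.*2.+1)).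
  by rewrite /= !h_min => ngap le; apply/le_anti; rewrite le leNgt ngap.
have [a [_ not_up_a gap_a]] := gap_after_down eq_size gap_k.
have [p [V gap_p]] := gap_at_valley Dg Dg' eq_size not_up_a gap_a.
exists p => //; apply/eqP; apply: contraT => ne_g'r.
have [z hz] := height_parity p.+1 eq_size.
(* The gap at [p.+1] is even, hence at least 2. *)
have le_rg' : below (raise_word g p) g'.
  apply/belowP => j; rewrite height_raise //; case: eqP => [->|_]; last by rewrite addr0.
  by move: gap_p; rewrite hz; lia.
have /andP[sbelow_gr _] := covers_raise Dg V.
have := no_between (raise_word g p); rewrite sbelow_gr /sbelow le_rg' Dg' eq_sym ne_g'r.
by rewrite (dyck_raise Dg V).
Qed.

Lemma covers_count n (g g' : word n) : is_dyck g ->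
  covers g g' = \sum_(0 <= i < n.*2) (valley g i && (g' == raise_word g i)) :> nat.
Proof.
move=> Dg; case cov: (covers g g'); last first.
  rewrite big1 // => i _; apply/eqP; rewrite eqb0; apply: contraFN cov => /andP[V /eqP->].
  exact: covers_raise.
have [i V ->] := covers_raiseP cov.
have lt_i_n : i < n.*2 by have := valley_size V; rewrite size_tuple; lia.
rewrite -(@sum_pin n.*2 i true) //; apply: eq_bigr => j _; rewrite andbT.
case: (eqVneq j i) => [-> | ne_ji]; first by rewrite V eqxx.
case Vj: (valley g j) => //=; case: eqP => // /(raise_word_inj V Vj) eq_ij.
by rewrite eq_ij eqxx in ne_ji.
Qed.

Lemma sum_covers n (g : word n) (F : word n -> nat) : is_dyck g ->
  \sum_(g' : word n) covers g g' * F g' =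
  \sum_(0 <= i < n.*2) valley g i * F (raise_word g i).
Proof.
move=> Dg; under eq_bigr => g' _ do rewrite covers_count // big_distrl.
rewrite exchange_big /=; apply: eq_bigr => i _.
rewrite (bigD1 (raise_word g i)) //= eqxx andbT big1 ?addn0 // => g' /negbTE ->.
by rewrite andbF.
Qed.

Fixpoint cover_chains n (h : nat) (g : word n) : nat :=
  if h is h'.+1 then \sum_(g' : word n) covers g g' * cover_chains h' g' else 1.

Lemma cover_chains_raise n h (g : word n) : is_dyck g -> cover_chains h g = raise_chains h g.
Proof.
elim: h g => [// | h IHh] g Dg; rewrite raise_chainsS /= sum_covers // size_tuple.
apply: eq_bigr => i _; case V: (valley g i); rewrite ?mul0n // !mul1n IHh //.
exact: dyck_raise.
Qed.

Lemma sum_quadruples (T : finType) (F : T -> T -> T -> T -> nat) :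
  \sum_(c : T * T * T * T) F c.1.1.1 c.1.1.2 c.1.2 c.2 =
  \sum_(x : T) \sum_(y : T) \sum_(z : T) \sum_(w : T) F x y z w.
Proof.
rewrite -(pair_bigA _ (fun p w => F p.1.1 p.1.2 p.2 w)) /=.
rewrite -(pair_bigA _ (fun p z => \sum_(w : T) F p.1 p.2 z w)) /=.
by rewrite -(pair_bigA _ (fun x y => \sum_(z : T) \sum_(w : T) F x y z w)).
Qed.

Lemma sc3_cover_chains n : sc3 n = \sum_(g : word n | is_dyck g) cover_chains 3 g.
Proof.
rewrite /sc3 -sum1_card big_mkcond /=.
under eq_bigr => c _ do rewrite in_set.
rewrite (sum_quadruples (fun x y z w => nat_of_bool [&& covers x y, covers y z & covers z w])).
rewrite [RHS]big_mkcond /=; apply: eq_bigr => g0 _; case: ifPn => [_ | not_dyck].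
  apply: eq_bigr => g1 _; rewrite big_distrr; apply: eq_bigr => g2 _.
  rewrite /= !big_distrr; apply: eq_bigr => g3 _.
  by case: (covers g0 g1); case: (covers g1 g2); case: (covers g2 g3).
apply: big1 => g1 _; apply: big1 => g2 _; apply: big1 => g3 _.
by rewrite /covers /sbelow (negbTE not_dyck).
Qed.

Theorem mainTheorem6 (n : nat) :
  sc3 n = \sum_(g : word n | is_dyck g) weight g.
Proof.
rewrite sc3_cover_chains; apply: eq_bigr => g Dg.
by rewrite cover_chains_raise // raise_chains3.
Qed.
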